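(* Let $\mathcal{F}=(W,R)$ be a frame. Then: (1) $\mathcal{F}\models_{\mathsf{B}^{\Box}}\Box J_2\varphi\to J_2\varphi$ (for all formulas $\varphi$) iff $R$ is reflexive; (2) $\mathcal{F}\models_{\mathsf{B}^{\Box}}\Box J_2\varphi\to\Box\Box J_2\varphi$ iff $R$ is transitive; (3) $\mathcal{F}\models_{\mathsf{B}^{\Box}}\Diamond J_2\varphi\to\Box\Diamond J_2\varphi$ iff $R$ is Euclidean.
   Context: Formulas are built from a countably infinite set of propositional variables and the constants $0,1$ using the unary connectives $\neg$, $J_2$, $\Box$ and the binary connective $\vee$; $\varphi\to\psi:=\neg\varphi\vee\psi$ and $\Diamond\varphi:=\neg\Box\neg\varphi$. Let $\mathbf{WK}^e$ be the algebra on $\{0,\tfrac12,1\}$ with $\neg0=1$, $\neg1=0$, $\neg\tfrac12=\tfrac12$; $a\vee b=\tfrac12$ if $a=\tfrac12$ or $b=\tfrac12$, otherwise $a\vee b=\max(a,b)$; $J_2(1)=1$, $J_2(\tfrac12)=J_2(0)=0$. A frame is a pair $(W,R)$ with $W\neq\emptyset$ and $R\subseteq W\times W$. A Bochvar-Kripke model on $(W,R)$ is $(W,R,v)$ with $v:W\times\mathrm{Fm}\to\{0,\tfrac12,1\}$ such that each $v(w,\cdot)$ commutes with $\neg,\vee,J_2,0,1$ as computed in $\mathbf{WK}^e$, and: $v(w,\Box\varphi)=\tfrac12$ iff $v(w,\varphi)=\tfrac12$; $v(w,\Box\varphi)=1$ iff $v(w,\varphi)\neq\tfrac12$ and $v(s,\varphi)=1$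 for all $s$ with $wRs$; $v(w,\Box\varphi)=0$ iff $v(w,\varphi)\neq\tfrac12$ and $v(s,\varphi)\neq1$ for some $s$ with $wRs$. $\mathcal{F}\models_{\mathsf{B}^{\Box}}\varphi$ means: for every Bochvar-Kripke model $(W,R,v)$ on $\mathcal{F}$ and every $w\in W$, $v(w,\varphi)=1$. $R$ is Euclidean if $wRs$ and $wRt$ imply $sRt$. *)

Inductive Fm : Type :=
| FVar : nat -> Fm
| FZero : Fm
| FOne : Fm
| FNeg : Fm -> Fm
| FJ2 : Fm -> Fm
| FBox : Fm -> Fm
| FOr : Fm -> Fm -> Fm.

Definition FImp (a b : Fm) : Fm := FOr (FNeg a) b.
Definition FDia (a : Fm) : Fm := FNeg (FBox (FNeg a)).

(* The three truth values of WK^e: 0, 1/2, 1. *)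
Inductive WK : Type := W0 | Wh | W1.

Definition wk_neg (a : WK) : WK :=
  match a with W0 => W1 | Wh => Wh | W1 => W0 end.

Definition wk_or (a b : WK) : WK :=
  match a, b with
  | Wh, _ => Wh
  | _, Wh => Wh
  | W1, _ => W1
  | _, W1 => W1
  | W0, W0 => W0
  end.

Definition wk_J2 (a : WK) : WK :=
  match a with W1 => W1 | _ => W0 end.

Definition BKModel (W : Type) (R : W -> W -> Prop) (v : W -> Fm -> WK) : Prop :=
  forall w : W,
    v w FZero = W0 /\
    v w FOne = W1 /\
    (forall a, v w (FNeg a) = wk_neg (v w a)) /\
    (forall a b, v w (FOr a b) = wk_or (v w a) (v w b)) /\
    (forall a, v w (FJ2 a) = wk_J2 (v w a)) /\
    (forall a,
        (v w (FBox a) = Wh <-> v w a = Wh) /\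
        (v w (FBox a) = W1 <-> (v w a <> Wh /\ forall s, R w s -> v s a = W1)) /\
        (v w (FBox a) = W0 <-> (v w a <> Wh /\ exists s, R w s /\ v s a <> W1))).

Definition frame_valid (W : Type) (R : W -> W -> Prop) (phi : Fm) : Prop :=
  forall v : W -> Fm -> WK, BKModel W R v -> forall w : W, v w phi = W1.

Definition reflexiveR {W : Type} (R : W -> W -> Prop) : Prop := forall w, R w w.
Definition transitiveR {W : Type} (R : W -> W -> Prop) : Prop :=
  forall w s t, R w s -> R s t -> R w t.
Definition euclideanR {W : Type} (R : W -> W -> Prop) : Prop :=
  forall w s t, R w s -> R w t -> R s t.

(* On formulas that never take the value 1/2 — among them every [J2 phi] and
   everything built from such formulas by negation and [Box] — the Bochvar box
   behaves exactly like the classical Kripke box.  Hence the three schemes are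
   the classical T, 4 and 5 axioms on a two-valued fragment, and their
   correspondence with reflexivity, transitivity and euclideanness goes through
   as in classical modal logic: soundness by unfolding the truth conditions, and
   the converses by valuing a variable as the indicator of a suitable set of
   worlds. *)

From Stdlib Require Import Classical ClassicalEpsilon.

Section BochvarKripkeModel.

Variables (W : Type) (R : W -> W -> Prop) (v : W -> Fm -> WK).
Hypothesis Hv : BKModel W R v.

Lemma val_neg w a : v w (FNeg a) = wk_neg (v w a).
Proof. destruct (Hv w) as (_ & _ & Hneg & _). apply Hneg. Qed.

Lemma val_or w a b : v w (FOr a b) = wk_or (v w a) (v w b).
Proof. destruct (Hv w) as (_ & _ & _ & Hor & _). apply Hor. Qed.

Lemma val_J2 w a : v w (FJ2 a) = wk_J2 (v w a).
Proof. destruct (Hv w) as (_ & _ & _ & _ & HJ2 & _). apply HJ2. Qed.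

Lemma val_box_Wh w a : v w (FBox a) = Wh <-> v w a = Wh.
Proof. destruct (Hv w) as (_ & _ & _ & _ & _ & Hbox). apply Hbox. Qed.

Lemma val_box_W1 w a :
  v w (FBox a) = W1 <-> v w a <> Wh /\ forall s, R w s -> v s a = W1.
Proof. destruct (Hv w) as (_ & _ & _ & _ & _ & Hbox). apply Hbox. Qed.

Definition definite (a : Fm) : Prop := forall w, v w a <> Wh.

Lemma definite_J2 a : definite (FJ2 a).
Proof. intro w. rewrite val_J2. destruct (v w a); discriminate. Qed.

Lemma definite_neg a : definite a -> definite (FNeg a).
Proof. intros Ha w. rewrite val_neg. specialize (Ha w). destruct (v w a); easy. Qed.

Lemma definite_box a : definite a -> definite (FBox a).
Proof. intros Ha w Hbox. rewrite val_box_Wh in Hbox. exact (Ha w Hbox). Qed.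

Lemma definite_dia a : definite a -> definite (FDia a).
Proof. intro Ha. apply definite_neg, definite_box, definite_neg, Ha. Qed.

Lemma holds_neg a w : definite a -> v w (FNeg a) = W1 <-> v w a <> W1.
Proof. intro Ha. rewrite val_neg. specialize (Ha w). destruct (v w a); easy. Qed.

Lemma holds_imp a b w :
  definite a -> definite b -> v w (FImp a b) = W1 <-> (v w a = W1 -> v w b = W1).
Proof.
  intros Ha Hb. unfold FImp. rewrite val_or, val_neg.
  specialize (Ha w). specialize (Hb w).
  destruct (v w a), (v w b); simpl; intuition congruence.
Qed.

Lemma holds_box a w :
  definite a -> v w (FBox a) = W1 <-> forall s, R w s -> v s a = W1.
Proof. intro Ha. rewrite val_box_W1. specialize (Ha w). tauto. Qed.

Lemma holds_dia a w :
  definite a -> v w (FDia a) = W1 <-> exists s, R w s /\ v s a = W1.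
Proof.
  intro Ha. unfold FDia.
  rewrite holds_neg, holds_box by auto using definite_neg, definite_box.
  setoid_rewrite holds_neg; [|exact Ha].
  split.
  - intro Hnot. apply NNPP. intro Hnone. apply Hnot. intros s Hs Hsa.
    apply Hnone. exists s. tauto.
  - intros (s & Hs & Hsa) Hall. exact (Hall s Hs Hsa).
Qed.

End BochvarKripkeModel.

#[local] Hint Resolve definite_J2 definite_neg definite_box definite_dia : core.

Section IndicatorModel.

Variables (W : Type) (R : W -> W -> Prop).

Fixpoint eval (V : W -> nat -> WK) (a : Fm) (w : W) : WK :=
  match a with
  | FVar n => V w n
  | FZero => W0
  | FOne => W1
  | FNeg b => wk_neg (eval V b w)
  | FJ2 b => wk_J2 (eval V b w)
  | FOr b c => wk_or (eval V b w) (eval V c w)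
  | FBox b =>
      match eval V b w with
      | Wh => Wh
      | _ => if excluded_middle_informative (forall s, R w s -> eval V b s = W1)
             then W1 else W0
      end
  end.

Lemma not_all_succ_iff (f : W -> WK) w :
  ~ (forall s, R w s -> f s = W1) <-> exists s, R w s /\ f s <> W1.
Proof.
  split.
  - intro Hnot. apply NNPP. intro Hnone. apply Hnot. intros s Hs.
    apply NNPP. intro Hsf. apply Hnone. exists s. tauto.
  - intros (s & Hs & Hsf) Hall. exact (Hsf (Hall s Hs)).
Qed.

Lemma eval_BKModel V : BKModel W R (fun w a => eval V a w).
Proof.
  intro w. do 5 (split; [reflexivity |]). intro a; simpl.
  rewrite <- not_all_succ_iff.
  destruct (eval V a w); try destruct excluded_middle_informative;
    intuition congruence.
Qed.

Definition indicator (P : W -> Prop) : W -> Fm -> WK :=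
  fun w a => eval (fun x _ => if excluded_middle_informative (P x) then W1 else W0) a w.

Lemma indicator_BKModel P : BKModel W R (indicator P).
Proof. apply eval_BKModel. Qed.

Lemma indicator_J2_var P n w : indicator P w (FJ2 (FVar n)) = W1 <-> P w.
Proof.
  unfold indicator; simpl.
  destruct excluded_middle_informative; simpl; intuition discriminate.
Qed.

End IndicatorModel.

Section Correspondence.

Variables (W : Type) (R : W -> W -> Prop).

Lemma valid_T_iff_reflexive :
  (forall phi, frame_valid W R (FImp (FBox (FJ2 phi)) (FJ2 phi))) <-> reflexiveR R.
Proof.
  split.
  - intros Hvalid w.
    pose proof (indicator_BKModel W R (R w)) as Hv.
    specialize (Hvalid (FVar 0) _ Hv w).
    rewrite holds_imp, holds_box in Hvalid by eauto.
    apply (indicator_J2_var W R _ 0), Hvalid.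
    intros s Hs. apply (indicator_J2_var W R _ 0), Hs.
  - intros Hrefl phi v Hv w.
    rewrite holds_imp, holds_box by eauto.
    intro Hbox. exact (Hbox w (Hrefl w)).
Qed.

Lemma valid_4_iff_transitive :
  (forall phi, frame_valid W R (FImp (FBox (FJ2 phi)) (FBox (FBox (FJ2 phi)))))
  <-> transitiveR R.
Proof.
  split.
  - intros Hvalid w s t Hws Hst.
    pose proof (indicator_BKModel W R (R w)) as Hv.
    specialize (Hvalid (FVar 0) _ Hv w).
    rewrite holds_imp, 2!holds_box in Hvalid by eauto.
    assert (Hbox_s : indicator W R (R w) s (FBox (FJ2 (FVar 0))) = W1).
    { apply Hvalid; [| exact Hws].
      intros u Hu. apply (indicator_J2_var W R _ 0), Hu. }
    rewrite holds_box in Hbox_s by eauto.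
    apply (indicator_J2_var W R _ 0), Hbox_s, Hst.
  - intros Htrans phi v Hv w.
    rewrite holds_imp, 2!holds_box by eauto.
    intros Hbox s Hws.
    rewrite holds_box by eauto.
    intros t Hst. exact (Hbox t (Htrans w s t Hws Hst)).
Qed.

Lemma valid_5_iff_euclidean :
  (forall phi, frame_valid W R (FImp (FDia (FJ2 phi)) (FBox (FDia (FJ2 phi)))))
  <-> euclideanR R.
Proof.
  split.
  - intros Hvalid w s t Hws Hwt. apply NNPP. intro Hst.
    pose proof (indicator_BKModel W R (fun u => ~ R s u)) as Hv.
    specialize (Hvalid (FVar 0) _ Hv w).
    rewrite holds_imp, holds_box, holds_dia in Hvalid by eauto.
    assert (Hdia_s : indicator W R (fun u => ~ R s u) s (FDia (FJ2 (FVar 0))) = W1).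
    { apply Hvalid; [| exact Hws].
      exists t. split; [exact Hwt |]. apply (indicator_J2_var W R _ 0), Hst. }
    rewrite holds_dia in Hdia_s by eauto.
    destruct Hdia_s as (u & Hsu & Hu).
    apply (indicator_J2_var W R _ 0) in Hu. exact (Hu Hsu).
  - intros Heucl phi v Hv w.
    rewrite holds_imp, holds_box, holds_dia by eauto.
    intros (t & Hwt & Ht) s Hws.
    rewrite holds_dia by eauto.
    exists t. split; [exact (Heucl w s t Hws Hwt) | exact Ht].
Qed.

End Correspondence.

Theorem mainTheorem14 (W : Type) (HW : inhabited W) (R : W -> W -> Prop) :
  ((forall phi, frame_valid W R (FImp (FBox (FJ2 phi)) (FJ2 phi))) <-> reflexiveR R) /\
  ((forall phi, frame_valid W R (FImp (FBox (FJ2 phi)) (FBox (FBox (FJ2 phi))))) <-> transitiveR R) /\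
  ((forall phi, frame_valid W R (FImp (FDia (FJ2 phi)) (FBox (FDia (FJ2 phi))))) <-> euclideanR R).
Proof.
  split; [| split].
  - apply valid_T_iff_reflexive.
  - apply valid_4_iff_transitive.
  - apply valid_5_iff_euclidean.
Qed.
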